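(* Let $v\ne 7$ with $v\equiv 1\pmod 6$ or $v\equiv 9\pmod{18}$. Then every cyclic $\mathrm{STS}(v)$ admits a zero-sum $3$-flow.
   Context: A Steiner triple system $\mathrm{STS}(v)$ is a pair $(X,\mathcal{B})$ with $|X|=v$ and $\mathcal{B}$ a collection of 3-subsets of $X$ such that every 2-subset lies in exactly one block. It is cyclic if, after relabeling, $X=\mathbb{Z}_v$ and $i\mapsto i+1\pmod v$ maps blocks to blocks. For a design $(X,\mathcal{B})$ and integer $n\ge2$, a zero-sum $n$-flow is a map $f:\mathcal{B}\to\{\pm1,\ldots,\pm(n-1)\}$ such that $\sum_{B\ni x} f(B)=0$ for every point $x$; thus a zero-sum 3-flow takes values in $\{\pm1,\pm2\}$. *)

From mathcomp Require Import all_boot all_order all_algebra.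
Set Implicit Arguments. Unset Strict Implicit. Unset Printing Implicit Defensive.
Import GRing.Theory Num.Theory.

Definition is_STS (T : finType) (B : {set {set T}}) : Prop :=
  (forall b, b \in B -> #|b| = 3) /\
  (forall x y : T, x != y -> #|[set b in B | (x \in b) && (y \in b)]| = 1).

(* Cyclic: after relabeling the points by Z_v (here 'I_v, v = #|T|) via a
   bijection g with inverse h, the map i |-> i+1 (mod v) maps blocks to blocks. *)
Definition is_cyclic_design (T : finType) (v : nat) (B : {set {set T}}) : Prop :=
  exists (g : T -> 'I_v) (h : 'I_v -> T),
    cancel g h /\ cancel h g /\
    (forall b, b \in B -> [set h (ordS (g x)) | x in b] \in B).

Definition zero_sum_flow (T : finType) (B : {set {set T}}) (n : nat)
    (f : {set T} -> int) : Prop :=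
  (forall b, b \in B -> f b != 0 /\ (`|f b| < n%:Z)%R) /\
  (forall x : T, (\sum_(b in B | x \in b) f b)%R = 0%R).

From mathcomp Require Import all_boot all_order all_algebra.
From mathcomp Require Import ring zify.
Set Implicit Arguments. Unset Strict Implicit. Unset Printing Implicit Defensive.
Import GRing.Theory Num.Theory.
Local Open Scope ring_scope.

(* Relabel the points by Z_v so that the blocks are closed under all
   translations.  The difference set diffs b = {y - x | x <> y in b} of a
   block is translation invariant, and the difference sets of the blocks
   partition Z_v \ {0} into classes.  Each y <> x lies in exactly one block
   with x, whose class is that of y - x; hence for any weight G on classes,
   twice the sum of G (diffs b) over the blocks b through a point x equals
   the sum of |X| G X over all classes X, independently of x (point_sum).

   - v = 1 mod 6 (flow_coprime3): no block is fixed by a nonzero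
     translation, so every class has 6 elements and there are (v-1)/6 <> 1
     classes; a zero-sum labelling F of the classes by +-1, +-2 gives the
     flow b |-> F (diffs b).
   - v = 9 mod 18 (flow_9mod18): counting the ordered pairs of points with
     distinct residues mod 3 inside blocks produces a rainbow block b0,
     whose points have distinct residues.  Its orbit is regular and the
     three orbit blocks through any point are x - e + b0, e in b0, with
     shifts of distinct residues.  The other classes are signed greedily so
     that they contribute the same s, |s| <= 3, at every point, and the
     block t + b0 gets the label u (t mod 3) with u 0 + u 1 + u 2 = - s.
   Finally the flow is pulled back along the relabeling. *)

(* A finite set of size other than 1 carries a labelling by nonzero
   integers of absolute value < 3 whose sum vanishes: pair elements off
   with +1/-1 and label a leftover triple by 1, 1, -2. *)
Lemma zero_sum_labelling (A : finType) (K : {set A}) : #|K| != 1%N ->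
  exists F : A -> int, (forall a, F a != 0 /\ `|F a| < 3) /\ \sum_(a in K) F a = 0.
Proof.
have [m] := ubnP #|K|; elim: m K => // m IH K; rewrite ltnS => leKm K_neq1.
have [/eqP|K_gt0] := posnP #|K|.
  by rewrite cards_eq0 => /eqP ->; exists (fun=> 1); rewrite big_set0.
have [a Ka] : exists a, a \in K by apply/card_gt0P.
have [b Kab] : exists b, b \in K :\ a.
  by apply/card_gt0P; rewrite (cardsD1 a K) Ka in leKm K_neq1 *; lia.
have ba : b != a by move: Kab; rewrite !inE => /andP[].
have card_rest : #|K :\ a :\ b| = #|K|.-2.
  by move: (cardsD1 b (K :\ a)) (cardsD1 a K); rewrite Kab Ka; lia.
have [/eqP/cards1P[c rest_c]|rest_neq1] := eqVneq #|K :\ a :\ b| 1%N.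
  have : c \in K :\ a :\ b by rewrite rest_c set11.
  rewrite !inE => /and3P[cb ca _].
  exists (fun x => if x == c then -2 else 1); split; first by move=> x; case: ifP.
  rewrite (big_setD1 a Ka) (big_setD1 b Kab) rest_c big_set1 eqxx.
  by rewrite eq_sym (negbTE ca) eq_sym (negbTE cb).
have [F [F_lab F_sum]] : exists F : A -> int,
    (forall a, F a != 0 /\ `|F a| < 3) /\ \sum_(x in K :\ a :\ b) F x = 0.
  by apply: IH rest_neq1; rewrite card_rest; lia.
exists (fun x => if x == a then 1 else if x == b then -1 else F x); split.
  by move=> x; case: ifP => // _; case: ifP.
rewrite (big_setD1 a Ka) (big_setD1 b Kab) eqxx (negbTE ba) eqxx.
rewrite (eq_bigr F) ?F_sum ?addr0 ?addrA ?subrr //.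
by move=> x; rewrite !inE => /and3P[/negbTE -> /negbTE -> _].
Qed.

(* Greedy signing: if all weights are at most c, signs can be chosen so
   that the weighted signed sum stays within [-c, c]; each new sign is
   chosen opposite to the sign of the current partial sum. *)
Lemma balanced_signing (A : finType) (K : {set A}) (w : A -> nat) (c : nat) :
  {in K, forall a, (w a <= c)%N} ->
  exists F : A -> int, (forall a, F a = 1 \/ F a = -1) /\
    `|\sum_(a in K) F a *+ w a| <= c%:R.
Proof.
have [m] := ubnP #|K|; elim: m K => // m IH K; rewrite ltnS => leKm w_le.
have [/eqP|K_gt0] := posnP #|K|.
  by rewrite cards_eq0 => /eqP ->; exists (fun=> 1); rewrite big_set0; split; [left|].
have [a Ka] : exists a, a \in K by apply/card_gt0P.
have [F [F_sign F_sum]] : exists F : A -> int, (forall a, F a = 1 \/ F a = -1) /\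
    `|\sum_(x in K :\ a) F x *+ w x| <= c%:R.
  apply: IH => [|x /setD1P[_ /w_le //]].
  by move: (cardsD1 a K); rewrite Ka; lia.
set s := \sum_(x in K :\ a) F x *+ w x in F_sum.
exists (fun x => if x == a then (if 0 <= s then -1 else 1) else F x); split.
  by move=> x; case: ifP => _; [case: ifP => _; [right|left] | apply: F_sign].
rewrite (big_setD1 a Ka) eqxx (eq_bigr (fun x => F x *+ w x)); last first.
  by move=> x /setD1P[/negbTE ->].
rewrite -/s; have := w_le a Ka; move: F_sum; rewrite !ler_norml.
by case: (lerP 0 s) => s_sign; rewrite ?mulNrn -[1 *+ w a]/((w a)%:R) !natz /=; lia.
Qed.

Lemma three_labels_sum (s : int) : `|s| <= 3 -> exists u : nat -> int,
  (forall m, u m != 0 /\ `|u m| < 3) /\ u 0%N + u 1%N + u 2%N = - s.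
Proof.
pose lab (x : int) := x != 0 /\ `|x| < 3.
have triple (t u0 u1 u2 : int) : lab u0 -> lab u1 -> lab u2 -> u0 + u1 + u2 = - t ->
    exists u : nat -> int, (forall m, lab (u m)) /\ u 0%N + u 1%N + u 2%N = - t.
  move=> u0_lab u1_lab u2_lab sum_u.
  exists (fun m => if m == 0%N then u0 else if m == 1%N then u1 else u2).
  by split=> // m; case: ifP => _; [|case: ifP].
rewrite ler_norml => s_bd.
have : s = -3 \/ s = -2 \/ s = -1 \/ s = 0 \/ s = 1 \/ s = 2 \/ s = 3 by lia.
case=> [->|[->|[->|[->|[->|[->|->]]]]]].
- by apply: (triple _ 1 1 1).
- by apply: (triple _ 2 1 (-1)).
- by apply: (triple _ 1 1 (-1)).
- by apply: (triple _ 1 1 (-2)).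
- by apply: (triple _ (-1) (-1) 1).
- by apply: (triple _ (-2) (-1) 1).
- by apply: (triple _ (-1) (-1) (-1)).
Qed.

Lemma card_set3 (T : finType) (x y z : T) :
  x != y -> x != z -> y != z -> #|[set x; y; z]| = 3%N.
Proof.
move=> xy xz yz; rewrite -setUA !cardsU1 cards1 !inE.
by rewrite (negbTE xy) (negbTE xz) (negbTE yz).
Qed.

Section Translations.
Variable V : finZmodType.
Implicit Types (b : {set V}) (s t x y : V).

Definition shift t b : {set V} := [set z + t | z in b].

Lemma mem_shift t b z : (z \in shift t b) = (z - t \in b).
Proof.
apply/imsetP/idP => [[y b_y ->]|b_zt]; first by rewrite addrK.
by exists (z - t); rewrite ?subrK.
Qed.

Lemma shift0 b : shift 0 b = b.
Proof. by apply/setP => z; rewrite mem_shift subr0. Qed.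

Lemma shiftD s t b : shift s (shift t b) = shift (t + s) b.
Proof. by apply/setP => z; rewrite !mem_shift opprD addrA addrAC. Qed.

Definition offdiag b := [set p in setX b b | p.1 != p.2].

Lemma card_offdiag b : #|offdiag b| = (#|b| * #|b| - #|b|)%N.
Proof.
have diag : setX b b :\: [set p : V * V | p.1 != p.2] = [set (x, x) | x in b].
  apply/setP => [[u w]]; rewrite !inE /= negbK.
  apply/idP/imsetP => [/andP[/eqP <- /andP[b_u _]]|[x b_x [-> ->]]].
    by exists u.
  by rewrite eqxx b_x.
have := cardsID [set p : V * V | p.1 != p.2] (setX b b).
rewrite diag card_imset => [|x y [] //].
have -> : setX b b :&: [set p : V * V | p.1 != p.2] = offdiag b.
  by apply/setP => p; rewrite !inE.
by rewrite cardsX => <-; rewrite addnK.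
Qed.

Definition diffs b := [set p.2 - p.1 | p in offdiag b].

Lemma diffsP b d :
  reflect (exists x y, [/\ x \in b, y \in b, x != y & d = y - x]) (d \in diffs b).
Proof.
apply: (iffP imsetP) => [[[x y]]|[x [y [b_x b_y xy ->]]]].
  by rewrite !inE /= => /andP[/andP[b_x b_y] xy] ->; exists x, y.
by exists (x, y) => //; rewrite !inE /= b_x b_y xy.
Qed.

Lemma card_diffs_le b : #|b| = 3%N -> (#|diffs b| <= 6)%N.
Proof. by move=> b3; rewrite (leq_trans (leq_imset_card _ _)) // card_offdiag b3. Qed.

Lemma diffs_shift t b : diffs (shift t b) = diffs b.
Proof.
apply/setP => d; apply/diffsP/diffsP => -[x [y [b_x b_y xy ->]]].
  exists (x - t), (y - t); rewrite -!mem_shift (inj_eq (addIr _)); split => //.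
  by rewrite opprB addrA subrK.
exists (x + t), (y + t); rewrite !mem_shift !addrK (inj_eq (addIr _)); split => //.
by rewrite opprD addrA addrAC addrK.
Qed.

End Translations.

Lemma count_residue M r : (r < 3)%N -> (\sum_(0 <= y < 3 * M) ((y %% 3) == r) = M)%N.
Proof.
move=> r_lt3; elim: M => [|M IH]; first by rewrite muln0 big_geq.
have -> : (3 * M.+1 = (3 * M).+3)%N by rewrite mulnS; lia.
rewrite !big_nat_recr //= IH.
have e0 : ((3 * M) %% 3 = 0)%N by rewrite modnMr.
have e1 : ((3 * M).+1 %% 3 = 1)%N by rewrite -addn1 mulnC modnMDl.
have e2 : ((3 * M).+2 %% 3 = 2)%N by rewrite -addn2 mulnC modnMDl.
rewrite e0 e1 e2; move: r_lt3 {IH}; case: r => [|[|[|]]] //= _; lia.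
Qed.

Lemma sum_perm3 (u : nat -> int) i k l : (i < 3)%N -> (k < 3)%N -> (l < 3)%N ->
  i != k -> i != l -> k != l -> u i + (u k + u l) = u 0%N + u 1%N + u 2%N.
Proof.
by case: i => [|[|[|]]] //; case: k => [|[|[|]]] //; case: l => [|[|[|]]] // *; ring.
Qed.

Section CyclicSTS.
Variable n : nat.
Local Notation N := n.+2.
Local Notation Z := 'I_N.

Lemma Zp_mulrn_eq0 (t : Z) k : coprime N k -> t *+ k = 0 -> t = 0.
Proof.
move=> coNk tk0; have : (N %| val t * k)%N.
  by rewrite /dvdn; have := congr1 val tk0; rewrite Zp_mulrn /= => ->.
rewrite Gauss_dvdl // => N_dvd_t; apply: val_inj => /=.
have [//|t_gt0] := posnP (val t).
by have := dvdn_leq t_gt0 N_dvd_t; rewrite leqNgt ltn_ord.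
Qed.

Variable B : {set {set Z}}.
Hypothesis block_size : forall b, b \in B -> #|b| = 3%N.
Hypothesis pair_unique :
  forall x y : Z, x != y -> #|[set b in B | (x \in b) && (y \in b)]| = 1%N.
Hypothesis shift1_closed : forall b, b \in B -> shift 1 b \in B.
(* Oddness of N (necessary for an STS) excludes translations of order 2. *)
Hypothesis N_odd : odd N.

Implicit Types (b : {set Z}) (s t x y d : Z).

Lemma shift_closed t b : b \in B -> shift t b \in B.
Proof.
move=> Bb; rewrite -(natr_Zp t); elim: (val t) => [|k IH]; first by rewrite shift0.
by rewrite mulrSr -shiftD; apply: shift1_closed.
Qed.

Definition blk x y := odflt set0 [pick b in B | (x \in b) && (y \in b)].

Lemma blocks_through x y :
  x != y -> [set b in B | (x \in b) && (y \in b)] = [set blk x y].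
Proof.
move=> xy; have /eqP/cards1P [b0 through_b0] := pair_unique xy.
rewrite through_b0; congr [set _]; rewrite /blk; case: pickP => [b b_ok | none] /=.
  by apply/esym/set1P; rewrite -through_b0 inE.
have : b0 \in [set b in B | (x \in b) && (y \in b)] by rewrite through_b0 set11.
by rewrite inE none.
Qed.

Lemma blkP x y : x != y -> [/\ blk x y \in B, x \in blk x y & y \in blk x y].
Proof.
move=> xy; have : blk x y \in [set b in B | (x \in b) && (y \in b)].
  by rewrite blocks_through // set11.
by rewrite inE => /and3P[].
Qed.

Lemma blk_uniq x y b : x != y -> b \in B -> x \in b -> y \in b -> b = blk x y.
Proof. by move=> xy Bb b_x b_y; apply/set1P; rewrite -blocks_through // inE Bb b_x b_y. Qed.

Lemma blk_shift x y t : x != y -> blk (x + t) (y + t) = shift t (blk x y).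
Proof.
move=> xy; have [B_xy xy_x xy_y] := blkP xy.
apply/esym/blk_uniq; first by rewrite (inj_eq (addIr t)).
- exact: shift_closed.
- by rewrite mem_shift addrK.
- by rewrite mem_shift addrK.
Qed.

(* A nonzero translation fixing a block has order 3: the block is then
   {p, p + t, p + 2t}, and oddness of N excludes 2t = 0. *)
Lemma stabilizer_order3 b t : b \in B -> shift t b = b -> t != 0 -> t *+ 3 = 0.
Proof.
move=> Bb fix_b t_neq0.
have stable z : z \in b -> z + t \in b by rewrite -{2}fix_b mem_shift addrK.
have [p b_p] : exists p, p \in b by apply/card_gt0P; rewrite block_size.
have t2_neq0 : t + t != 0.
  by apply: contra t_neq0 => /eqP tt0; apply/eqP/(@Zp_mulrn_eq0 t 2); rewrite ?coprimen2.
have b_eq : b = [set p; p + t; p + t + t].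
  apply/eqP; rewrite eq_sym eqEcard block_size // card_set3 ?andbT.
  - by apply/subsetP => z; rewrite !inE => /orP[/orP[]|] /eqP ->; rewrite ?stable.
  - by rewrite -{1}[p]addr0 (inj_eq (addrI p)) eq_sym.
  - by rewrite -addrA -{1}[p]addr0 (inj_eq (addrI p)) eq_sym.
  - by rewrite -{1}[p + t]addr0 (inj_eq (addrI _)) eq_sym.
have := stable _ (stable _ (stable _ b_p)); rewrite {1}b_eq !inE.
case/orP => [/orP[]|] /eqP p3t.
- have -> : t *+ 3 = p + t + t + t - p by ring.
  by rewrite p3t subrr.
- have t2_eq : t + t = p + t + t + t - (p + t) by ring.
  by move: t2_neq0; rewrite t2_eq p3t subrr eqxx.
- have t_eq : t = p + t + t + t - (p + t + t) by ring.
  by move: t_neq0; rewrite t_eq p3t subrr eqxx.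
Qed.

Definition regular b := forall t, shift t b = b -> t = 0.

Lemma regular_shift_inj b s t : regular b -> shift s b = shift t b -> s = t.
Proof.
move=> reg_b st; apply/eqP; rewrite -subr_eq0; apply/eqP/reg_b.
by rewrite -shiftD st shiftD subrr shift0.
Qed.

(* In a regular block each difference arises from a single ordered pair:
   two pairs with the same difference differ by a translation fixing b. *)
Lemma regular_diff_inj b x y x' y' : b \in B -> regular b ->
  x \in b -> y \in b -> x' \in b -> y' \in b -> x != y -> x' != y' ->
  y - x = y' - x' -> x = x'.
Proof.
move=> Bb reg_b b_x b_y b_x' b_y' xy xy' same_diff.
suff /reg_b/eqP : shift (x' - x) b = b by rewrite subr_eq0 => /eqP.
have sh_x' : x' \in shift (x' - x) b by rewrite mem_shift subKr.
have sh_y' : y' \in shift (x' - x) b.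
  by rewrite mem_shift opprB addrA addrAC -same_diff subrK.
by rewrite (blk_uniq xy' (shift_closed _ Bb) sh_x' sh_y') -(blk_uniq xy' Bb b_x' b_y').
Qed.

Lemma card_diffs_regular b : b \in B -> regular b -> #|diffs b| = 6%N.
Proof.
move=> Bb reg_b; rewrite card_in_imset ?card_offdiag ?block_size //.
move=> [x y] [x' y']; rewrite !inE /=.
move=> /andP[/andP[b_x b_y] xy] /andP[/andP[b_x' b_y'] xy'] same.
have x_eq := regular_diff_inj Bb reg_b b_x b_y b_x' b_y' xy xy' same.
by rewrite -x_eq in same *; congr (_, _); apply: (addIr (- x)).
Qed.

Lemma same_diffs_shift b b' : b \in B -> b' \in B -> diffs b = diffs b' ->
  exists t, b = shift t b'.
Proof.
move=> Bb Bb' same; have [x' [y' [z' [[b'_x' b'_y' _] [xy' _ _]]]]] :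
    exists x' y' z', [/\ x' \in b', y' \in b' & z' \in b'] /\ [/\ x' != y', y' != z' & z' != x'].
  by apply/card_gt2P; rewrite block_size.
have : y' - x' \in diffs b by rewrite same; apply/diffsP; exists x', y'.
case/diffsP => x [y [b_x b_y xy d_eq]]; exists (x - x').
have sh_x : x \in shift (x - x') b' by rewrite mem_shift subKr.
have sh_y : y \in shift (x - x') b'.
  by rewrite mem_shift opprB addrA addrAC -d_eq subrK.
by rewrite (blk_uniq xy Bb b_x b_y) (blk_uniq xy (shift_closed _ Bb') sh_x sh_y).
Qed.

Lemma coprime3_regular b : coprime N 3 -> b \in B -> regular b.
Proof.
move=> coN3 Bb t fix_t; case: (eqVneq t 0) => // t_neq0.
exact: Zp_mulrn_eq0 coN3 (stabilizer_order3 Bb fix_t t_neq0).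
Qed.

(* The difference class of d != 0: the difference set of the block through
   0 and d.  The classes partition the nonzero elements of Z_N. *)
Definition class d := diffs (blk 0 d).
Definition classes := class @: [set~ 0].

Lemma diffs_blk x y : x != y -> diffs (blk x y) = class (y - x).
Proof.
move=> xy; have d_neq0 : 0 != y - x by rewrite eq_sym subr_eq0 eq_sym.
by rewrite /class -(diffs_shift x (blk 0 (y - x))) -(blk_shift x d_neq0) add0r subrK.
Qed.

Lemma class_self d : d != 0 -> d \in class d.
Proof.
rewrite eq_sym => d_neq0; have [_ blk_0 blk_d] := blkP d_neq0.
by apply/diffsP; exists 0, d; rewrite subr0.
Qed.

Lemma class_mem d e : d != 0 -> e \in class d -> e != 0 /\ class e = class d.
Proof.
rewrite eq_sym => d_neq0 /diffsP[x [y [b_x b_y xy ->]]].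
split; first by rewrite subr_eq0 eq_sym.
have [Bb _ _] := blkP d_neq0.
by rewrite -diffs_blk // -(blk_uniq xy Bb b_x b_y).
Qed.

Lemma class_size_le X : X \in classes -> (#|X| <= 6)%N.
Proof.
case/imsetP => d; rewrite in_setC1 eq_sym => d_neq0 ->.
by have [Bb _ _] := blkP d_neq0; apply/card_diffs_le/block_size.
Qed.

Lemma sum_over_classes (G : {set Z} -> int) :
  \sum_(d in [set~ 0]) G (class d) = \sum_(X in classes) G X *+ #|X|.
Proof.
rewrite (partition_big_imset class); apply: eq_bigr => X /imsetP[d0 d0_neq0 ->].
rewrite -sumr_const; apply: eq_big => [d|d /andP[_ /eqP ->]] //.
rewrite in_setC1 in d0_neq0; apply/andP/idP => [[d_neq0 /eqP <-]|d_in].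
  by apply: class_self; rewrite -in_setC1.
by have [d_neq0 ->] := class_mem d0_neq0 d_in; rewrite in_setC1.
Qed.

(* Double counting: every block through x contains two other points, and
   every point y != x lies in exactly one block with x. *)
Lemma sum_blocks_through x (phi : {set Z} -> int) :
  (\sum_(b in B | x \in b) phi b) *+ 2 = \sum_(y | y != x) phi (blk x y).
Proof.
transitivity (\sum_(y | y != x) \sum_(b | (b \in B) && ((x \in b) && (y \in b))) phi b);
  last first.
  apply: eq_bigr => y yx; symmetry.
  rewrite (eq_bigl (fun b => b \in [set blk x y])); first by rewrite big_set1.
  by move=> b; rewrite -blocks_through ?(eq_sym x) // inE.
rewrite (exchange_big_dep (fun b => (b \in B) && (x \in b))) /=; last first.
  by move=> y b _ /and3P[-> -> _].
rewrite -sumrMnl; apply: eq_bigr => b /andP[Bb b_x].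
rewrite (eq_bigl (fun y => y \in b :\ x)); last by move=> y; rewrite !inE Bb b_x.
rewrite sumr_const; move: (cardsD1 x b); rewrite block_size // b_x add1n.
by move=> /eqP; rewrite eqSS => /eqP <-.
Qed.

Lemma point_sum x (G : {set Z} -> int) :
  (\sum_(b in B | x \in b) G (diffs b)) *+ 2 = \sum_(X in classes) G X *+ #|X|.
Proof.
rewrite sum_blocks_through -sum_over_classes.
rewrite (eq_bigr (fun y => G (class (y - x)))) => [|y yx]; last first.
  by rewrite diffs_blk // eq_sym.
rewrite (reindex_inj (addIr x)) /=.
by apply: eq_big => [d|d _]; rewrite ?addrK // in_setC1 -subr_eq0 addrK.
Qed.

(* Case v = 1 mod 6: all blocks are regular, so all classes have size 6
   and there are (N - 1) / 6 != 1 of them.  A zero-sum labelling F of the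
   classes gives the flow b |-> F (diffs b). *)
Lemma flow_coprime3 : N != 7%N -> coprime N 3 -> exists f, zero_sum_flow B 3 f.
Proof.
move=> N_neq7 coN3.
have class_size X : X \in classes -> #|X| = 6%N.
  case/imsetP => d; rewrite in_setC1 eq_sym => d_neq0 ->.
  by have [Bb _ _] := blkP d_neq0; apply/card_diffs_regular/coprime3_regular.
have sum_sizes : \sum_(X in classes) (1 : int) *+ #|X| = (#|classes| * 6)%:R.
  rewrite (eq_bigr (fun=> 1 *+ 6)); last by move=> X /class_size ->.
  by rewrite sumr_const -mulrnA mulnC.
have classes_neq1 : #|classes| != 1%N.
  have := sum_over_classes (fun=> 1); rewrite sumr_const cardsC1 card_ord sum_sizes.
  by move/eqP; rewrite eqr_nat => /eqP; lia.
have [F [F_lab F_sum]] := zero_sum_labelling classes_neq1.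
exists (fun b => F (diffs b)); split=> [b _|x]; first exact: F_lab.
have := point_sum x F.
rewrite [S in _ = S -> _](eq_bigr (fun X => F X *+ 6)); last first.
  by move=> X /class_size ->.
by rewrite sumrMnl F_sum mul0rn => /eqP; rewrite mulrn_eq0 => /eqP.
Qed.

Definition res (z : Z) := (val z %% 3)%N.

Lemma res_lt z : (res z < 3)%N.
Proof. exact: ltn_pmod. Qed.

Lemma resD : (3 %| N)%N -> forall x y, res (x + y) = ((res x + res y) %% 3)%N.
Proof. by move=> dvd3N x y; rewrite /res /= (modn_dvdm _ dvd3N) modnDm. Qed.

(* If 9 divides N, every element of order dividing 3 is a multiple of N/3,
   hence has residue 0. *)
Lemma res_order3 : (9 %| N)%N -> forall t, t *+ 3 = 0 -> res t = 0%N.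
Proof.
move=> dvd9N t t3; have : (N %| val t * 3)%N.
  by rewrite /dvdn; have := congr1 val t3; rewrite Zp_mulrn /= => ->.
move/(dvdn_trans dvd9N); rewrite -[9%N]/(3 * 3)%N dvdn_pmul2r // => dvd3t.
exact/eqP.
Qed.

Lemma res_sub_inj : (3 %| N)%N -> forall x p q,
  res (x - p) = res (x - q) -> res p = res q.
Proof.
move=> dvd3N x p q same; have := res_lt p; have := res_lt q.
have := resD dvd3N (x - p) p; have := resD dvd3N (x - q) q.
by rewrite !subrK same; lia.
Qed.

Lemma card_res : (3 %| N)%N -> forall r, (r < 3)%N ->
  (\sum_(y : Z) (res y == r) = N %/ 3)%N.
Proof.
move=> dvd3N r r_lt3; rewrite /res -(big_mkord xpredT (fun i => ((i %% 3)%N == r : nat))).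
by rewrite -{1}(divnK dvd3N) mulnC count_residue.
Qed.

Lemma sum_block_pairs (psi : Z -> Z -> nat) :
  (\sum_(b in B) \sum_(x in b) \sum_(y in b | y != x) psi x y =
   \sum_x \sum_(y | y != x) psi x y)%N.
Proof.
rewrite (exchange_big_dep xpredT) //=; apply: eq_bigr => x _.
rewrite (exchange_big_dep (fun y => y != x)) /=; last by move=> b y _ /andP[].
apply: eq_bigr => y yx.
transitivity (\sum_(b in [set b in B | (x \in b) && (y \in b)]) psi x y)%N.
  by apply: eq_bigl => b; rewrite !inE yx andbT andbA.
by rewrite sum_nat_const pair_unique ?mul1n // eq_sym.
Qed.

Definition rainbow b := [forall x in b, forall y in b, (x != y) ==> (res x != res y)].

Definition mixed_pairs b := (\sum_(x in b) \sum_(y in b) (res x != res y))%N.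

(* A non-rainbow triple has 0 or 4 mixed pairs. *)
Lemma mixed_pairs_non_rainbow b : b \in B -> ~~ rainbow b -> (4 %| mixed_pairs b)%N.
Proof.
move=> Bb; have : (2 < #|b|)%N by rewrite block_size.
case/card_gt2P => [x [y [z [[b_x b_y b_z] [xy yz zx]]]]].
have b_eq : b = [set x; y; z].
  apply/eqP; rewrite eq_sym eqEcard block_size // card_set3 // 1?eq_sym // andbT.
  by apply/subsetP => u; rewrite !inE => /orP[/orP[]|] /eqP ->.
have x_yz : x \notin y |: [set z] by rewrite !inE negb_or xy eq_sym zx.
have y_z : y \notin [set z] by rewrite inE.
case/boolP: [&& res x != res y, res y != res z & res z != res x] => [dist|non_dist].
  case/negP; apply/forall_inP => u b_u; apply/forall_inP => w b_w; apply/implyP.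
  move: b_u b_w dist; rewrite b_eq !inE.
  by do 2!case/orP=> [/orP[]|] /eqP ->; rewrite ?eqxx //;
    case/and3P=> *; rewrite // eq_sym.
rewrite /mixed_pairs b_eq -setUA.
do 3!rewrite ?(big_setU1 _ x_yz) ?(big_setU1 _ y_z) ?big_set1 /=.
move: non_dist; have := res_lt x; have := res_lt y; have := res_lt z.
move: (res x) (res y) (res z) => a c e.
by case: a => [|[|[|a]]] //; case: c => [|[|[|c]]] //; case: e => [|[|[|e]]].
Qed.

Lemma sum_mixed_pairs : (3 %| N)%N ->
  (\sum_(b in B) mixed_pairs b = N * (N - N %/ 3))%N.
Proof.
move=> dvd3N.
transitivity (\sum_(b in B) \sum_(x in b) \sum_(y in b | y != x) (res x != res y))%N.
  apply: eq_bigr => b _; apply: eq_bigr => x b_x.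
  by rewrite (bigD1 x b_x) /= eqxx add0n.
rewrite sum_block_pairs; transitivity (\sum_(x : Z) (N - N %/ 3))%N; last first.
  by rewrite sum_nat_const card_ord.
apply: eq_bigr => x _.
have split_x : (\sum_y (res x != res y) + \sum_y (res y == res x) = N)%N.
  rewrite -big_split /= (eq_bigr (fun=> 1%N)) => [|y _]; last by rewrite eq_sym; case: eqP.
  by rewrite sum1_card card_ord.
rewrite card_res ?res_lt // (bigD1 x) //= eqxx add0n in split_x.
by move: split_x; move: (\sum_(y | y != x) _)%N => S; lia.
Qed.

(* For N = 9 mod 18 the total number of mixed pairs, 6 (N/3)^2, is not a
   multiple of 4, since N/3 is odd. *)
Lemma mixed_total_not4 M : (M %% 18 = 9)%N -> ~~ (4 %| M * (M - M %/ 3))%N.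
Proof.
move=> M9; have M_eq : M = (3 * (M %/ 3))%N by rewrite mulnC divnK // /dvdn; apply/eqP; lia.
set k := (M %/ 3)%N in M_eq *.
have k_odd : odd k by move: (modn2 k); case: (odd k) => //= ?; lia.
have -> : (M * (M - k) = 6 * (k * k))%N.
  by rewrite M_eq (_ : 3 * k - k = 2 * k)%N; [ring | lia].
have : ((k * k) %% 2 = 1)%N by rewrite modn2 oddM k_odd.
by move: (k * k)%N => kk kk_odd; apply/negP; lia.
Qed.

Lemma exists_rainbow : (N %% 18 = 9)%N -> exists2 b, b \in B & rainbow b.
Proof.
move=> N9; have dvd3N : (3 %| N)%N by rewrite /dvdn; apply/eqP; lia.
have [/exists_inP[b Bb rb]|none] := boolP [exists b in B, rainbow b]; first by exists b.
have : (4 %| \sum_(b in B) mixed_pairs b)%N.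
  apply: dvdn_sum => b Bb; apply: mixed_pairs_non_rainbow => //.
  by apply: contra none => rb; apply/exists_inP; exists b.
by rewrite sum_mixed_pairs // (negbTE (mixed_total_not4 N9)).
Qed.

Lemma rainbow_res b u w : rainbow b -> u \in b -> w \in b -> u != w -> res u != res w.
Proof.
move=> /forall_inP/(_ u) rb b_u b_w; have /forall_inP/(_ w b_w)/implyP := rb b_u.
exact.
Qed.

(* For 9 | N a rainbow block is regular: a translation fixing it has
   order 3, hence residue 0, and would map a point to a distinct point of
   the same residue. *)
Lemma rainbow_regular b : (9 %| N)%N -> b \in B -> rainbow b -> regular b.
Proof.
move=> dvd9N Bb rb t fix_t; case: (eqVneq t 0) => // t_neq0.
have dvd3N : (3 %| N)%N by apply: dvdn_trans dvd9N.
have res_t := res_order3 dvd9N (stabilizer_order3 Bb fix_t t_neq0).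
have [p b_p] : exists p, p \in b by apply/card_gt0P; rewrite block_size.
have b_pt : p + t \in b by rewrite -fix_t mem_shift addrK.
have p_pt : p != p + t by rewrite -{1}[p]addr0 (inj_eq (addrI p)) eq_sym.
have := rainbow_res rb b_p b_pt p_pt.
by rewrite resD // res_t addn0 modn_small ?res_lt ?eqxx.
Qed.

(* For every point x, the shifts x - e (e in a rainbow block) meet each
   residue class exactly once. *)
Lemma rainbow_residue_sum b (u : nat -> int) x : (3 %| N)%N -> b \in B -> rainbow b ->
  \sum_(e in b) u (res (x - e)) = u 0%N + u 1%N + u 2%N.
Proof.
move=> dvd3N Bb rb; have : (2 < #|b|)%N by rewrite block_size.
case/card_gt2P => [p [q [r [[b_p b_q b_r] [pq qr rp]]]]].
have pr : p != r by rewrite eq_sym.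
have b_eq : b = [set p; q; r].
  apply/eqP; rewrite eq_sym eqEcard block_size // card_set3 // andbT.
  by apply/subsetP => z; rewrite !inE => /orP[/orP[]|] /eqP ->.
have distinct y z : y \in b -> z \in b -> y != z -> res (x - y) != res (x - z).
  by move=> b_y b_z yz; apply: contra_neq (rainbow_res rb b_y b_z yz); exact: res_sub_inj.
have p_qr : p \notin q |: [set r] by rewrite !inE negb_or pq pr.
have q_r : q \notin [set r] by rewrite inE.
rewrite b_eq -setUA (big_setU1 _ p_qr) (big_setU1 _ q_r) big_set1 /=.
by apply: sum_perm3; rewrite ?res_lt ?distinct.
Qed.

Section RegularOrbit.
Variable b0 : {set Z}.
Hypothesis b0_block : b0 \in B.
Hypothesis b0_regular : regular b0.

Definition shift_of b := odflt 0 [pick t | shift t b0 == b].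

Lemma shift_ofK t : shift_of (shift t b0) = t.
Proof.
rewrite /shift_of; case: pickP => [s /eqP/(regular_shift_inj b0_regular) //| none] /=.
by move: (none t); rewrite eqxx.
Qed.

(* The blocks through x in the orbit of b0 are the translates of b0 by
   x - e, e in b0, and these are pairwise distinct. *)
Lemma orbit_sum x (phi : Z -> int) :
  \sum_(b | ((b \in B) && (x \in b)) && (diffs b == diffs b0)) phi (shift_of b) =
  \sum_(e in b0) phi (x - e).
Proof.
transitivity (\sum_(b in [set shift (x - e) b0 | e in b0]) phi (shift_of b)).
  apply: eq_bigl => b; apply/idP/imsetP => [|[e b0_e ->]].
    case/andP=> /andP[Bb b_x] /eqP same; have [t b_eq] := same_diffs_shift Bb b0_block same.
    by exists (x - t); rewrite ?subKr // -mem_shift -b_eq.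
  by rewrite shift_closed // mem_shift subKr b0_e diffs_shift eqxx.
rewrite big_imset /= => [|e e' _ _ /(regular_shift_inj b0_regular)/addrI/oppr_inj //].
by apply: eq_bigr => e _; rewrite shift_ofK.
Qed.

End RegularOrbit.

(* Case v = 9 mod 18.  Fix a rainbow block b0.  The classes other than
   diffs b0 get signs F with |sum F X * |X|| <= 6; by point_sum their blocks
   contribute the same amount s, |s| <= 3, at every point.  The blocks
   t + b0 of the orbit of b0 get the label u (t mod 3) with
   u 0 + u 1 + u 2 = - s; every point meets exactly one of them with each
   residue of t. *)
Lemma flow_9mod18 : (N %% 18 = 9)%N -> exists f, zero_sum_flow B 3 f.
Proof.
move=> N9; have dvd9N : (9 %| N)%N by rewrite /dvdn; apply/eqP; lia.
have dvd3N : (3 %| N)%N by apply: dvdn_trans dvd9N.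
have [b0 b0_block b0_rainbow] := exists_rainbow N9.
have b0_regular := rainbow_regular dvd9N b0_block b0_rainbow.
pose w X := if X == diffs b0 then 0%N else #|X|.
have w_le : {in classes, forall X, (w X <= 6)%N}.
  by move=> X /class_size_le; rewrite /w; case: eqP.
have [F [F_sign F_bd]] := balanced_signing w_le.
pose F' X := if X == diffs b0 then 0 else F X.
have other_sum x :
    (\sum_(b in B | x \in b) F' (diffs b)) *+ 2 = \sum_(X in classes) F X *+ w X.
  rewrite point_sum; apply: eq_bigr => X _; rewrite /F' /w.
  by case: eqP => _ //; rewrite mul0rn mulr0n.
set s := \sum_(b in B | 0 \in b) F' (diffs b).
have s_bd : `|s| <= 3.
  by move: F_bd; rewrite -(other_sum 0) -/s mulr2n !ler_norml; lia.
have [u [u_lab u_sum]] := three_labels_sum s_bd.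
exists (fun b => if diffs b == diffs b0 then u (res (shift_of b0 b)) else F (diffs b)).
split=> [b _|x]; first by case: ifP => _; [apply: u_lab | case: (F_sign (diffs b)) => ->].
rewrite (bigID (fun b => diffs b == diffs b0)) /=.
rewrite (eq_bigr (fun b => u (res (shift_of b0 b)))); last by move=> b /andP[_ ->].
rewrite (orbit_sum b0_block b0_regular x (fun t => u (res t))).
rewrite rainbow_residue_sum // u_sum.
rewrite (eq_bigr (fun b => F' (diffs b))); last first.
  by move=> b /andP[_ /negbTE b_out]; rewrite b_out /F' b_out.
have -> : \sum_(b | ((b \in B) && (x \in b)) && (diffs b != diffs b0)) F' (diffs b) =
          \sum_(b in B | x \in b) F' (diffs b).
  rewrite [RHS](bigID (fun b => diffs b == diffs b0)) /= [in RHS]big1 ?add0r //.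
  by move=> b /andP[_ /eqP ->]; rewrite /F' eqxx.
have := other_sum x; rewrite -(other_sum 0) -/s !mulr2n.
by move: (\sum_(b in B | x \in b) F' (diffs b)) => t; lia.
Qed.

End CyclicSTS.

Section Relabel.
Variables (T V : finType) (g : T -> V) (h : V -> T).
Hypotheses (gK : cancel g h) (hK : cancel h g).
Variable B : {set {set T}}.

Definition relabel : {set {set V}} := [set g @: b | b : {set T} in B].

Lemma mem_relabel_block (b : {set T}) z : (z \in g @: b) = (h z \in b).
Proof. by rewrite (can2_imset_pre _ gK hK) inE. Qed.

Lemma relabel_block_inj : injective (fun b : {set T} => g @: b).
Proof. exact/imset_inj/can_inj/gK. Qed.

Lemma relabel_STS : is_STS B -> is_STS relabel.
Proof.
move=> [block3 pairs]; split=> [_ /imsetP[b Bb ->]|x y xy].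
  by rewrite card_imset ?block3 //; apply: can_inj gK.
suff -> : [set b in relabel | (x \in b) && (y \in b)] =
          [set g @: b | b : {set T} in [set b in B | (h x \in b) && (h y \in b)]].
  by rewrite card_imset ?pairs ?(inj_eq (can_inj hK)) //; apply: relabel_block_inj.
apply/setP => b'; rewrite inE; apply/andP/imsetP => [[/imsetP[b Bb ->]]|[b]].
  by rewrite !mem_relabel_block => xy_b; exists b; rewrite // inE Bb.
by rewrite inE => /andP[Bb xy_b] ->; rewrite imset_f // !mem_relabel_block.
Qed.

Lemma relabel_flow m (f : {set V} -> int) :
  zero_sum_flow relabel m f -> zero_sum_flow B m (fun b => f (g @: b)).
Proof.
move=> [f_lab f_sum]; split=> [b Bb|x]; first by apply: f_lab; rewrite imset_f.
transitivity (\sum_(b in [set b in B | x \in b]) f (g @: b)).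
  by apply: eq_bigl => b; rewrite inE.
rewrite -(big_imset f (in2W relabel_block_inj)) /= -[RHS](f_sum (g x)).
apply: eq_bigl => b'; apply/imsetP/andP => [[b]|[/imsetP[b Bb ->]]].
  by rewrite inE => /andP[Bb b_x] ->; rewrite imset_f // imset_f.
by rewrite mem_relabel_block gK => b_x; exists b; rewrite // inE Bb.
Qed.

End Relabel.

Lemma relabel_shift1 (T : finType) n (g : T -> 'I_n.+2) h (B : {set {set T}}) :
  cancel g h -> cancel h g ->
  (forall b, b \in B -> [set h (ordS (g x)) | x in b] \in B) ->
  forall b, b \in relabel g B -> shift 1 b \in relabel g B.
Proof.
move=> gK hK cyc _ /imsetP[b Bb ->].
have ordS1 (i : 'I_n.+2) : ordS i = i + 1.
  by apply: val_inj => /=; rewrite (@modn_small 1) // addn1.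
suff -> : shift 1 (g @: b) = g @: [set h (ordS (g x)) | x in b] by rewrite imset_f ?cyc.
apply/setP => z; rewrite mem_shift !(mem_relabel_block gK hK).
apply/idP/imsetP => [b_z|[x b_x /(can_inj hK) ->]].
  by exists (h (z - 1)); rewrite // hK ordS1 subrK.
by rewrite ordS1 addrK gK.
Qed.

Local Close Scope ring_scope.

Theorem mainTheorem5 (T : finType) (v : nat) (B : {set {set T}}) :
  #|T| = v -> v != 7 -> (v %% 6 = 1 \/ v %% 18 = 9) ->
  is_STS B -> is_cyclic_design v B ->
  exists f : {set T} -> int, zero_sum_flow B 3 f.
Proof.
move=> card_T v_neq7 v_mod sts [g [h [gK [hK cyc]]]].
case: v card_T v_neq7 v_mod g h gK hK cyc => [|[|n]] card_T v_neq7 v_mod g h gK hK cyc.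
- by case: v_mod.
- (* A single point carries no block, and any f is a flow. *)
  exists (fun=> 1%R); split=> // x; apply: big1 => b /andP[Bb _].
  by have := max_card (mem b); rewrite sts.1 // card_T.
have [block3 pairs] := relabel_STS gK hK sts.
have shift1 := relabel_shift1 gK hK cyc.
have N_odd : odd n.+2.
  by move: (modn2 n.+2); case: (odd n.+2) => //= ?; case: v_mod => ?; lia.
have [f flow] : exists f, zero_sum_flow (relabel g B) 3 f.
  case: v_mod => [v1|v9]; last exact: flow_9mod18 block3 pairs shift1 N_odd v9.
  apply: flow_coprime3 block3 pairs shift1 N_odd v_neq7 _.
  by rewrite coprime_sym prime_coprime //; apply/negP => /dvdnP[k k_eq]; lia.
by exists (fun b : {set T} => f (g @: b)); apply: relabel_flow flow.
Qed.
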